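(* Let $a_1,a_2,a_3,a_4,a_5$ and $\alpha_1,\alpha_2,\alpha_3,\alpha_4,\alpha_5$ be positive real numbers with $\sum_{i=1}^5\alpha_i=\pi$ and $a_1\le a_2\le a_3\le a_4\le a_5$. Then $$\sum_{i=1}^5 a_i\cos\alpha_i\;\le\;\frac{1+\sqrt5}{4}\cdot\frac{1}{a_1a_2a_3a_4a_5}\left(a_1^2a_5^2a_2^2+a_5^2a_2^2a_3^2+a_2^2a_3^2a_4^2+a_3^2a_4^2a_1^2+a_4^2a_1^2a_5^2\right).$$ *)

From Stdlib Require Export Reals.

(* With C = (1 + sqrt 5)/4 = cos(pi/5), the quadratic form
   C (y1^2 + ... + y5^2) - (y1 y2 + y2 y3 + y3 y4 + y4 y5 - y5 y1) is positive
   semidefinite, being a sum of three squares modulo 4C^2 - 2C - 1 = 0.  Placing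
   vectors of lengths x1, ..., x5 in the plane at the partial sums of the angles
   (the last one closing up at pi, which produces the minus sign), the form applied
   to their two coordinates bounds sum x_i x_(i+1) cos s_i by C sum x_i^2.  Every
   choice of positive weights c_i on the edges of a 5-cycle is of the form
   c_i = x_i x_(i+1), which turns this into the theorem. *)

From Stdlib Require Import Reals Lra.
Open Scope R_scope.

Section GoldenForm.

Variable C : R.
Hypothesis golden_eq : 4 * C * C - 2 * C - 1 = 0.
Hypothesis half_lt_C : 1 < 2 * C.

Lemma pentagon_form_le (y1 y2 y3 y4 y5 : R) :
  y1 * y2 + y2 * y3 + y3 * y4 + y4 * y5 - y5 * y1
  <= C * (y1 * y1 + y2 * y2 + y3 * y3 + y4 * y4 + y5 * y5).
Proof.
  set (d := 2 * C - 1).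
  assert (sos : 2 * (C * (y1 * y1 + y2 * y2 + y3 * y3 + y4 * y4 + y5 * y5)
                     - (y1 * y2 + y2 * y3 + y3 * y4 + y4 * y5 - y5 * y1))
    = 2 * C * (y1 + d * (y5 - y2)) ^ 2 + (y2 - y3 + d * y5) ^ 2
      + d * (y3 - 2 * C * y4 + y5) ^ 2
      + (4 * C * C - 2 * C - 1)
        * (y2 * y2 - 2 * C * (y2 * y2 + y4 * y4 + y5 * y5)
           + 2 * (y1 * y2 + y3 * y4 + y4 * y5 - y1 * y5 - y2 * y5)
           + 4 * C * y2 * y5))
    by (unfold d; ring).
  rewrite golden_eq, Rmult_0_l, Rplus_0_r in sos.
  assert (sq1 : 0 <= 2 * C * (y1 + d * (y5 - y2)) ^ 2)
    by (apply Rmult_le_pos; [lra | apply pow2_ge_0]).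
  assert (sq2 := pow2_ge_0 (y2 - y3 + d * y5)).
  assert (sq3 : 0 <= d * (y3 - 2 * C * y4 + y5) ^ 2)
    by (apply Rmult_le_pos; [unfold d; lra | apply pow2_ge_0]).
  lra.
Qed.

Lemma sqr_eq_cos_sin (x b : R) :
  x * x = (x * cos b) * (x * cos b) + (x * sin b) * (x * sin b).
Proof. pose proof (sin2_cos2 b) as h; unfold Rsqr in h; nra. Qed.

Lemma cyclic_cos_sum_le (x1 x2 x3 x4 x5 s1 s2 s3 s4 s5 : R) :
  s1 + s2 + s3 + s4 + s5 = PI ->
  x1 * x2 * cos s1 + x2 * x3 * cos s2 + x3 * x4 * cos s3 + x4 * x5 * cos s4
    + x5 * x1 * cos s5
  <= C * (x1 * x1 + x2 * x2 + x3 * x3 + x4 * x4 + x5 * x5).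
Proof.
  intros hsum.
  pose (b2 := s1); pose (b3 := b2 + s2); pose (b4 := b3 + s3); pose (b5 := b4 + s4).
  replace s1 with (b2 - 0) by (unfold b2; ring).
  replace s2 with (b3 - b2) by (unfold b3; ring).
  replace s3 with (b4 - b3) by (unfold b4; ring).
  replace s4 with (b5 - b4) by (unfold b5; ring).
  replace s5 with (PI - b5) by (unfold b5, b4, b3, b2; lra).
  rewrite !cos_minus, cos_PI, sin_PI, cos_0, sin_0.
  pose proof (pentagon_form_le x1 (x2 * cos b2) (x3 * cos b3) (x4 * cos b4) (x5 * cos b5))
    as form_cos.
  pose proof (pentagon_form_le 0 (x2 * sin b2) (x3 * sin b3) (x4 * sin b4) (x5 * sin b5))
    as form_sin.
  rewrite (sqr_eq_cos_sin x2 b2), (sqr_eq_cos_sin x3 b3), (sqr_eq_cos_sin x4 b4),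
    (sqr_eq_cos_sin x5 b5).
  lra.
Qed.

Lemma ratio_pos (a b c d e : R) :
  0 < a -> 0 < b -> 0 < c -> 0 < d -> 0 < e -> 0 < a * b * c / (d * e).
Proof.
  intros; apply Rdiv_lt_0_compat; repeat apply Rmult_lt_0_compat; assumption.
Qed.

Lemma sqrt_mul_sqrt_eq (p q a : R) :
  0 <= p -> 0 <= q -> 0 <= a -> p * q = a * a -> sqrt p * sqrt q = a.
Proof.
  intros hp hq ha hpq; rewrite <- sqrt_mult, hpq by assumption; apply sqrt_square, ha.
Qed.

(* The ratios are the squares [x_i^2] of the solution of [x_i x_(i+1) = c_i]. *)
Lemma cyclic_weighted_cos_sum_le (c1 c2 c3 c4 c5 s1 s2 s3 s4 s5 : R) :
  0 < c1 -> 0 < c2 -> 0 < c3 -> 0 < c4 -> 0 < c5 ->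
  s1 + s2 + s3 + s4 + s5 = PI ->
  c1 * cos s1 + c2 * cos s2 + c3 * cos s3 + c4 * cos s4 + c5 * cos s5
  <= C * (c5 * c1 * c3 / (c2 * c4) + c1 * c2 * c4 / (c3 * c5) + c2 * c3 * c5 / (c4 * c1)
          + c3 * c4 * c1 / (c5 * c2) + c4 * c5 * c2 / (c1 * c3)).
Proof.
  intros h1 h2 h3 h4 h5 hsum.
  pose proof (ratio_pos c5 c1 c3 c2 c4 h5 h1 h3 h2 h4) as r1.
  pose proof (ratio_pos c1 c2 c4 c3 c5 h1 h2 h4 h3 h5) as r2.
  pose proof (ratio_pos c2 c3 c5 c4 c1 h2 h3 h5 h4 h1) as r3.
  pose proof (ratio_pos c3 c4 c1 c5 c2 h3 h4 h1 h5 h2) as r4.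
  pose proof (ratio_pos c4 c5 c2 c1 c3 h4 h5 h2 h1 h3) as r5.
  pose proof (cyclic_cos_sum_le (sqrt (c5 * c1 * c3 / (c2 * c4)))
    (sqrt (c1 * c2 * c4 / (c3 * c5))) (sqrt (c2 * c3 * c5 / (c4 * c1)))
    (sqrt (c3 * c4 * c1 / (c5 * c2))) (sqrt (c4 * c5 * c2 / (c1 * c3)))
    s1 s2 s3 s4 s5 hsum) as H.
  rewrite !sqrt_sqrt in H by lra.
  rewrite (sqrt_mul_sqrt_eq _ _ c1), (sqrt_mul_sqrt_eq _ _ c2), (sqrt_mul_sqrt_eq _ _ c3),
    (sqrt_mul_sqrt_eq _ _ c4), (sqrt_mul_sqrt_eq _ _ c5) in H by (lra || (field; repeat split; lra)).
  exact H.
Qed.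

End GoldenForm.

Lemma quarter_golden_ratio_spec (C : R) :
  C = (1 + sqrt 5) / 4 -> 4 * C * C - 2 * C - 1 = 0 /\ 1 < 2 * C.
Proof.
  intros ->.
  pose proof (sqrt_sqrt 5 ltac:(lra)) as h5.
  assert (1 < sqrt 5) by (rewrite <- sqrt_1; apply sqrt_lt_1; lra).
  split; nra.
Qed.

Theorem theorem1 (a1 a2 a3 a4 a5 t1 t2 t3 t4 t5 : R)
  (ha1 : 0 < a1) (ha2 : 0 < a2) (ha3 : 0 < a3) (ha4 : 0 < a4) (ha5 : 0 < a5)
  (ht1 : 0 < t1) (ht2 : 0 < t2) (ht3 : 0 < t3) (ht4 : 0 < t4) (ht5 : 0 < t5)
  (hsum : t1 + t2 + t3 + t4 + t5 = PI)
  (h12 : a1 <= a2) (h23 : a2 <= a3) (h34 : a3 <= a4) (h45 : a4 <= a5) :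
  a1 * cos t1 + a2 * cos t2 + a3 * cos t3 + a4 * cos t4 + a5 * cos t5 <=
  (1 + sqrt 5) / 4 * (1 / (a1 * a2 * a3 * a4 * a5)) *
  (a1 ^ 2 * a5 ^ 2 * a2 ^ 2 + a5 ^ 2 * a2 ^ 2 * a3 ^ 2 + a2 ^ 2 * a3 ^ 2 * a4 ^ 2
   + a3 ^ 2 * a4 ^ 2 * a1 ^ 2 + a4 ^ 2 * a1 ^ 2 * a5 ^ 2).
Proof.
  destruct (quarter_golden_ratio_spec ((1 + sqrt 5) / 4) eq_refl) as [hgolden hhalf].
  (* Going around the cycle in the order a1, a2, a4, a5, a3 matches the numerator. *)
  pose proof (cyclic_weighted_cos_sum_le _ hgolden hhalf a1 a2 a4 a5 a3 t1 t2 t4 t5 t3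
    ha1 ha2 ha4 ha5 ha3 ltac:(lra)) as H.
  match type of H with _ <= ?bound => replace (_ * (1 / _) * _) with bound end.
  - lra.
  - field; repeat split; lra.
Qed.
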